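(* Let $q\ge2$, $r\ge1$, $\rho\ge2$, $s\ge1$ be integers, $N=r+\rho-1$ and $n=sN$. For $t=0,\dots,s-1$ let $\mathcal{R}_{t+1}=\{tN+1,\dots,(t+1)N\}$. Let $\mathcal{C}\subseteq Q^n$ ($|Q|=q$) be a code with minimum distance $d$ such that $\mathcal{C}|_{\mathcal{R}_i}$ has minimum distance at least $\rho$ for every $i=1,\dots,s$. Let $$T:=\{\mathbf{i}=(i_1,\dots,i_s)\mid i_1+\cdots+i_s\ge d,\ i_j\in\{0,\rho,\rho+1,\dots,N\}\text{ for all }j\}.$$ Then $$|\mathcal{C}|\le 1+\min\sum_{\mathbf{j}\in\{0,\dots,N\}^s\setminus\{\underline0\}}f_{\mathbf{j}}K^{(N)}_{\mathbf{j}}(\underline0),$$ where the minimum is over all real $(f_{\mathbf{j}})$ satisfying $f_{\mathbf{j}}\ge0$ for $\mathbf{j}\in\{0,\dots,N\}^s\setminus\{\underline0\}$ and $1+\sum_{\mathbf{j}\in\{0,\dots,N\}^s\setminus\{\underline0\}}f_{\mathbf{j}}K^{(N)}_{\mathbf{j}}(\mathbf{i})\le0$ for all $\mathbf{i}\in T$.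
   Context: The Krawtchouk polynomial is $K_j^{(N)}(x)=\sum_{l=0}^j(-1)^l(q-1)^{j-l}\binom xl\binom{N-x}{j-l}$, and for $\mathbf{j}=(j_1,\dots,j_s)$, $\mathbf{x}=(x_1,\dots,x_s)$, $K^{(N)}_{\mathbf{j}}(\mathbf{x})=\prod_{p=1}^sK^{(N)}_{j_p}(x_p)$; $\underline0=(0,\dots,0)$. Minimum distance refers to Hamming distance; $\mathcal{C}|_{\mathcal{R}_i}$ is the projection of $\mathcal{C}$ onto the coordinates in $\mathcal{R}_i$. *)

From HB Require Import structures.
From mathcomp Require Import all_boot all_order all_algebra.
From mathcomp Require Import reals.
Set Implicit Arguments. Unset Strict Implicit. Unset Printing Implicit Defensive.
Import Order.TTheory GRing.Theory Num.Theory.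
Local Open Scope ring_scope.

Definition hdist (Q : finType) (m : nat) (x y : {ffun 'I_m -> Q}) : nat :=
  #|[set i | x i != y i]|.

Definition min_dist_eq (Q : finType) (m : nat) (C : {set {ffun 'I_m -> Q}})
    (d : nat) : Prop :=
  (exists x, exists y, [/\ x \in C, y \in C, x != y & hdist x y = d]) /\
  (forall x y, x \in C -> y \in C -> x != y -> (d <= hdist x y)%N).

Definition min_dist_ge (Q : finType) (m : nat) (C : {set {ffun 'I_m -> Q}})
    (d : nat) : Prop :=
  forall x y, x \in C -> y \in C -> x != y -> (d <= hdist x y)%N.

Lemma block_idx_proof (s N : nat) (t : 'I_s) (k : 'I_N) : (t * N + k < s * N)%N.
Proof.
have h1 : (t * N + k < t * N + N)%N by rewrite ltn_add2l.
apply: (leq_trans h1); by rewrite addnC -mulSn leq_mul2r ltn_ord orbT.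
Qed.

(* 0-based coordinate t*N + k (k < N), i.e. the (k+1)-th coordinate of
   block R_{t+1} = {tN+1,...,(t+1)N} in 1-based numbering. *)
Definition block_idx (s N : nat) (t : 'I_s) (k : 'I_N) : 'I_(s * N) :=
  Ordinal (block_idx_proof t k).

Definition proj_block (Q : finType) (s N : nat) (t : 'I_s)
    (x : {ffun 'I_(s * N) -> Q}) : {ffun 'I_N -> Q} :=
  [ffun k => x (block_idx t k)].

Definition proj_code (Q : finType) (s N : nat) (t : 'I_s)
    (C : {set {ffun 'I_(s * N) -> Q}}) : {set {ffun 'I_N -> Q}} :=
  [set proj_block t x | x in C].

Definition kraw (R : realType) (q N j x : nat) : R :=
  \sum_(l < j.+1)
     (-1) ^+ l * ((q - 1)%N)%:R ^+ (j - l) * ('C(x, l))%:R * ('C(N - x, j - l))%:R.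

Definition kraw_multi (R : realType) (q N s : nat)
    (j x : {ffun 'I_s -> 'I_N.+1}) : R :=
  \prod_(p < s) kraw R q N (j p) (x p).

Definition zero_idx (s N : nat) : {ffun 'I_s -> 'I_N.+1} := [ffun => ord0].

Definition Tset (s N rho d : nat) : {set {ffun 'I_s -> 'I_N.+1}} :=
  [set i : {ffun 'I_s -> 'I_N.+1} |
     (d <= \sum_(p < s) (i p : nat))%N &&
     [forall p, ((i p : nat) == 0%N) || (rho <= i p)%N]].

From HB Require Import structures.
From mathcomp Require Import all_boot all_order all_algebra.
From mathcomp Require Import reals.
From mathcomp Require Import ring zify.
Set Implicit Arguments. Unset Strict Implicit. Unset Printing Implicit Defensive.
Import Order.TTheory GRing.Theory Num.Theory.
Local Open Scope ring_scope.

(* Delsarte's linear programming argument.  For every multi-index j the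
   kernel (x, y) |-> K_j(dist_profile x y) is a finite sum of rank-one kernels
   g(x) g(y): on one letter, K_1^{(1)}(d(b, c)) = q [b = c] - 1 is such a sum;
   K_j^{(N)}(d(u, v)) is the coefficient of X^j in prod_i (1 + K_1^{(1)}(d(u_i, v_i)) X),
   and coefficients of products, as well as products over blocks, of such kernels
   are again such sums.  Hence sum_{x, y in C} K_j >= 0, so summing
   F = 1 + sum_j f_j K_j over C x C gives at least |C|^2.  Distinct codewords
   have their distance profile in T, where F <= 0, so the sum is also at most
   |C| F(0). *)

Lemma hdist_xx (Q : finType) m (u : {ffun 'I_m -> Q}) : hdist u u = 0%N.
Proof. by rewrite /hdist -sum1dep_card big_pred0 // => i; rewrite eqxx. Qed.

Lemma hdist_le (Q : finType) m (u v : {ffun 'I_m -> Q}) : (hdist u v <= m)%N.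
Proof. by rewrite /hdist (leq_trans (max_card _)) ?card_ord. Qed.

Lemma block_idx_inj s N : injective (fun p : 'I_s * 'I_N => block_idx p.1 p.2).
Proof.
move=> [t k] [t' k'] /(congr1 val) /= e.
have N_gt0 : (0 < N)%N by apply: leq_ltn_trans (ltn_ord k).
have et : t = t' :> nat.
  by have := congr1 (divn^~ N) e; rewrite !divnMDl // !divn_small // !addn0.
have ek : k = k' :> nat by have := congr1 (modn^~ N) e; rewrite !modnMDl !modn_small.
by congr pair; apply: val_inj.
Qed.

Lemma hdist_blocks (Q : finType) s N (x y : {ffun 'I_(s * N) -> Q}) :
  hdist x y = (\sum_(t < s) hdist (proj_block t x) (proj_block t y))%N.
Proof.
have block_idx_bij : bijective (fun p : 'I_s * 'I_N => block_idx p.1 p.2).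
  by apply: inj_card_bij (@block_idx_inj s N) _; rewrite card_prod !card_ord.
rewrite /hdist -sum1dep_card (reindex _ (onW_bij _ block_idx_bij)) /=.
under [RHS]eq_bigr do rewrite -sum1dep_card.
by rewrite pair_big_dep; apply: eq_bigl => -[t k]; rewrite /= !ffunE.
Qed.

Definition dist_profile (Q : finType) s N (x y : {ffun 'I_(s * N) -> Q}) :
    {ffun 'I_s -> 'I_N.+1} :=
  [ffun t => inord (hdist (proj_block t x) (proj_block t y))].

Lemma dist_profileE (Q : finType) s N (x y : {ffun 'I_(s * N) -> Q}) t :
  dist_profile x y t = hdist (proj_block t x) (proj_block t y) :> nat.
Proof. by rewrite ffunE inordK // ltnS hdist_le. Qed.

Lemma dist_profile_xx (Q : finType) s N (x : {ffun 'I_(s * N) -> Q}) :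
  dist_profile x x = zero_idx s N.
Proof. by apply/ffunP => t; apply: val_inj; rewrite /= dist_profileE hdist_xx ffunE. Qed.

Lemma dist_profile_in_Tset (Q : finType) s N rho d (C : {set {ffun 'I_(s * N) -> Q}})
    (x y : {ffun 'I_(s * N) -> Q}) :
  min_dist_ge C d -> (forall t, min_dist_ge (proj_code t C) rho) ->
  x \in C -> y \in C -> x != y -> dist_profile x y \in Tset s N rho d.
Proof.
move=> dC dproj xC yC xy; rewrite inE; apply/andP; split.
  by under eq_bigr do rewrite dist_profileE; rewrite -hdist_blocks dC.
apply/forallP => t; rewrite dist_profileE.
have [-> | neq] := eqVneq (proj_block t x) (proj_block t y); first by rewrite hdist_xx.
by apply/orP; right; apply: (dproj t _ _ _ _ neq); apply/imsetP; [exists x | exists y].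
Qed.

Section SumOfSquaresKernels.
Variable R : rcfType.

Definition sos_kernel (X : Type) (k : X -> X -> R) : Prop :=
  exists gs : seq (X -> R), forall x y, k x y = \sum_(g <- gs) g x * g y.

Lemma sos_kernel_ext X (k k' : X -> X -> R) :
  k =2 k' -> sos_kernel k -> sos_kernel k'.
Proof. by move=> e [gs h]; exists gs => x y; rewrite -e h. Qed.

Lemma sos_kernel0 X : sos_kernel (fun _ _ : X => 0).
Proof. by exists [::] => x y; rewrite big_nil. Qed.

Lemma sos_kernel1 X : sos_kernel (fun _ _ : X => 1).
Proof. by exists [:: fun _ => 1] => x y; rewrite big_seq1 mulr1. Qed.

Lemma sos_kernelD X (k1 k2 : X -> X -> R) :
  sos_kernel k1 -> sos_kernel k2 -> sos_kernel (fun x y => k1 x y + k2 x y).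
Proof. by move=> [g1 h1] [g2 h2]; exists (g1 ++ g2) => x y; rewrite big_cat h1 h2. Qed.

Lemma sos_kernelM X (k1 k2 : X -> X -> R) :
  sos_kernel k1 -> sos_kernel k2 -> sos_kernel (fun x y => k1 x y * k2 x y).
Proof.
move=> [g1 h1] [g2 h2].
exists [seq (fun x => g x * g' x) | g <- g1, g' <- g2] => x y.
rewrite big_allpairs_dep h1 h2 mulr_suml; apply: eq_bigr => g _.
by rewrite mulr_sumr; apply: eq_bigr => g' _; ring.
Qed.

Lemma sos_kernel_comp X Y (h : Y -> X) (k : X -> X -> R) :
  sos_kernel k -> sos_kernel (fun x y => k (h x) (h y)).
Proof. by move=> [gs e]; exists [seq g \o h | g <- gs] => x y; rewrite big_map e. Qed.

Lemma sos_kernel_sum X I (r : seq I) (P : pred I) (F : I -> X -> X -> R) :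
  (forall i, sos_kernel (F i)) -> sos_kernel (fun x y => \sum_(i <- r | P i) F i x y).
Proof.
move=> sosF; elim: r => [|i r IH].
  by apply: sos_kernel_ext (@sos_kernel0 X) => x y; rewrite big_nil.
case: (boolP (P i)) => Pi.
  by apply: sos_kernel_ext (sos_kernelD (sosF i) IH) => x y; rewrite big_cons Pi.
by apply: sos_kernel_ext IH => x y; rewrite big_cons (negPf Pi).
Qed.

Lemma sos_kernel_prod X I (r : seq I) (F : I -> X -> X -> R) :
  (forall i, sos_kernel (F i)) -> sos_kernel (fun x y => \prod_(i <- r) F i x y).
Proof.
move=> sosF; elim: r => [|i r IH].
  by apply: sos_kernel_ext (@sos_kernel1 X) => x y; rewrite big_nil.
by apply: sos_kernel_ext (sos_kernelM (sosF i) IH) => x y; rewrite big_cons.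
Qed.

Lemma sos_kernel_sum_ge0 (X : finType) (C : {pred X}) (k : X -> X -> R) :
  sos_kernel k -> 0 <= \sum_(x in C) \sum_(y in C) k x y.
Proof.
move=> [gs e].
have -> : \sum_(x in C) \sum_(y in C) k x y = \sum_(g <- gs) (\sum_(x in C) g x) ^+ 2.
  under eq_bigr do under eq_bigr do rewrite e.
  under eq_bigr do rewrite exchange_big /=.
  rewrite exchange_big; apply: eq_bigr => g _.
  rewrite expr2 mulr_suml; apply: eq_bigr => x _.
  by rewrite mulr_sumr.
by apply: sumr_ge0 => g _; apply: sqr_ge0.
Qed.

Definition coef_sos (X : Type) (P : X -> X -> {poly R}) : Prop :=
  forall j, sos_kernel (fun x y => (P x y)`_j).

Lemma coef_sos_ext X (P P' : X -> X -> {poly R}) :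
  P =2 P' -> coef_sos P -> coef_sos P'.
Proof. by move=> e sosP j; apply: sos_kernel_ext (sosP j) => x y; rewrite e. Qed.

Lemma coef_sos1 X : coef_sos (fun _ _ : X => 1).
Proof.
move=> [|j]; [apply: sos_kernel_ext (sos_kernel1 X) | apply: sos_kernel_ext (sos_kernel0 X)];
by move=> x y; rewrite coef1.
Qed.

Lemma coef_sosM X (P1 P2 : X -> X -> {poly R}) :
  coef_sos P1 -> coef_sos P2 -> coef_sos (fun x y => P1 x y * P2 x y).
Proof.
move=> sos1 sos2 j.
apply: sos_kernel_ext (sos_kernel_sum _ _ (fun i : 'I_j.+1 =>
  sos_kernelM (sos1 i) (sos2 (j - i)%N))) => x y.
by rewrite coefM.
Qed.

Lemma coef_sos_prod X I (r : seq I) (F : I -> X -> X -> {poly R}) :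
  (forall i, coef_sos (F i)) -> coef_sos (fun x y => \prod_(i <- r) F i x y).
Proof.
move=> sosF; elim: r => [|i r IH].
  by apply: coef_sos_ext (@coef_sos1 X) => x y; rewrite big_nil.
by apply: coef_sos_ext (coef_sosM (sosF i) IH) => x y; rewrite big_cons.
Qed.

Lemma coef_sos_lin X (k : X -> X -> R) :
  sos_kernel k -> coef_sos (fun x y => 1 + k x y *: 'X).
Proof.
move=> sosk [|[|j]]; [apply: sos_kernel_ext (sos_kernel1 X)
  | apply: sos_kernel_ext sosk | apply: sos_kernel_ext (sos_kernel0 X)] => x y;
by rewrite coefD coef1 coefZ coefX ?mulr0 ?addr0 ?mulr1 ?add0r.
Qed.

Definition coord_kraw (Q : eqType) (q : nat) (b c : Q) : R :=
  if b == c then (q - 1)%N%:R else -1.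

(* sum_e (q [b = e] - 1) (q [c = e] - 1) = q (q [b = c] - 1) when q = |Q|. *)
Lemma sos_coord_kraw (Q : finType) : (0 < #|Q|)%N -> sos_kernel (@coord_kraw Q #|Q|).
Proof.
move=> Q_gt0; set q : R := #|Q|%:R.
have q_gt0 : 0 < q by rewrite ltr0n.
pose g (e b : Q) := ((b == e)%:R * q - 1) / Num.sqrt q.
exists [seq g e | e <- enum Q] => b c; rewrite big_map big_enum /=.
have delta_sum (F : Q -> R) a : \sum_e (a == e)%:R * F e = F a.
  rewrite (bigD1 a) //= eqxx mul1r big1 ?addr0 // => e /negPf.
  by rewrite eq_sym => ->; rewrite mul0r.
have sqrt_q : Num.sqrt q ^+ 2 = q by rewrite sqr_sqrtr ?ltW.
have q_neq0 : q != 0 by rewrite gt_eqF.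
have -> : \sum_e g e b * g e c = q^-1 * \sum_e (q ^+ 2 * ((b == e)%:R * (c == e)%:R)
    - q * ((b == e)%:R * 1) - q * ((c == e)%:R * 1) + 1).
  by rewrite mulr_sumr; apply: eq_bigr => e _; rewrite /g mulrACA -expr2 exprVn sqrt_q; ring.
rewrite !big_split /= !sumrN -!mulr_sumr !delta_sum sumr_const.
rewrite /coord_kraw eq_sym natrB // -/q.
by case: (c == b); rewrite /= ?mulr1 ?mulr0; field.
Qed.

End SumOfSquaresKernels.

Lemma coef_lin_exp (R : comNzRingType) (c : R) n k :
  ((1 + c *: 'X) ^+ n)`_k = c ^+ k * 'C(n, k)%:R.
Proof.
elim: n k => [|n IH] k.
  by rewrite expr0 coef1; case: k => [|k]; rewrite ?bin0 ?bin0n ?mulr1 ?mulr0.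
rewrite exprS mulrDl mul1r -scalerAl coefD coefZ coefXM IH.
case: k => [|k] /=; first by rewrite !bin0 !expr0 mulr0 addr0.
by rewrite IH binS natrD exprS; ring.
Qed.

Section Krawtchouk.
Variable R : realType.

Lemma kraw_coef q N j m :
  kraw R q N j m = ((1 + (-1) *: 'X) ^+ m * (1 + (q - 1)%N%:R *: 'X) ^+ (N - m))`_j.
Proof. by rewrite coefM; apply: eq_bigr => l _; rewrite !coef_lin_exp; ring. Qed.

Lemma prod_coord_kraw (Q : finType) q N (u v : {ffun 'I_N -> Q}) :
  \prod_(i < N) (1 + coord_kraw R q (u i) (v i) *: 'X) =
  (1 + (-1) *: 'X) ^+ hdist u v * (1 + (q - 1)%N%:R *: 'X) ^+ (N - hdist u v).
Proof.
set D := [set i | u i != v i].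
have cardDC : (N - #|D|)%N = #|~: D| by have := cardsC D; rewrite card_ord; lia.
rewrite /hdist -/D cardDC -!prodr_const (bigID (mem D)) /=; congr (_ * _).
  by apply: eq_bigr => i; rewrite inE /coord_kraw => /negPf ->.
by apply: eq_big => [i | i]; rewrite ?inE /coord_kraw // negbK => ->.
Qed.

Lemma kraw_multi_sos (Q : finType) s N (j : {ffun 'I_s -> 'I_N.+1}) :
  (0 < #|Q|)%N ->
  sos_kernel (fun x y : {ffun 'I_(s * N) -> Q} => kraw_multi R #|Q| j (dist_profile x y)).
Proof.
move=> Q_gt0; apply: sos_kernel_prod => t.
apply: sos_kernel_ext
  (@coef_sos_prod R _ _ (index_enum 'I_N) (fun i x y => 1 +
     coord_kraw R #|Q| (proj_block t x i) (proj_block t y i) *: 'X) _ (j t)) => [x y|i].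
  by rewrite dist_profileE kraw_coef prod_coord_kraw.
exact/coef_sos_lin/(sos_kernel_comp (fun x => proj_block t x i))/sos_coord_kraw.
Qed.

End Krawtchouk.

Section LinearProgrammingBound.
Variable R : numDomainType.

Lemma card_le_of_kernel (X : finType) (C : {set X}) (F : X -> X -> R) (a : R) :
  (0 < #|C|)%N ->
  #|C|%:R ^+ 2 <= \sum_(x in C) \sum_(y in C) F x y ->
  (forall x, x \in C -> F x x <= a) ->
  (forall x y, x \in C -> y \in C -> x != y -> F x y <= 0) ->
  #|C|%:R <= a.
Proof.
move=> C_gt0 sumF_ge diagF offdiagF.
have sumF_le : \sum_(x in C) \sum_(y in C) F x y <= \sum_(x in C) a.
  apply: ler_sum => x xC; rewrite (bigD1 x) //= -[a]addr0 lerD ?diagF //.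
  by apply: sumr_le0 => y /andP[yC yx]; rewrite offdiagF // eq_sym.
have := le_trans sumF_ge sumF_le.
by rewrite sumr_const -[a *+ _]mulr_natl expr2 ler_pM2l // ltr0n.
Qed.

Lemma sum_kernel_comb_ge (X I : finType) (C : {pred X}) (P : {pred I}) (f : I -> R)
    (K : I -> X -> X -> R) :
  (forall i, P i -> 0 <= f i) ->
  (forall i, P i -> 0 <= \sum_(x in C) \sum_(y in C) K i x y) ->
  #|C|%:R ^+ 2 <= \sum_(x in C) \sum_(y in C) (1 + \sum_(i | P i) f i * K i x y).
Proof.
move=> f_ge0 K_ge0.
under eq_bigr do rewrite big_split /= sumr_const exchange_big /=.
rewrite big_split /= sumr_const expr2 mulr_natr lerDl exchange_big /=.
apply: sumr_ge0 => i Pi; under eq_bigr do rewrite -mulr_sumr.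
by rewrite -mulr_sumr mulr_ge0 ?f_ge0 ?K_ge0.
Qed.
End LinearProgrammingBound.

Theorem theorem4 (R : realType) (q r rho s d : nat) (Q : finType)
  (hq : (2 <= q)%N) (hr : (1 <= r)%N) (hrho : (2 <= rho)%N) (hs : (1 <= s)%N)
  (hQ : #|Q| = q)
  (C : {set {ffun 'I_(s * (r + rho - 1)%N) -> Q}})
  (hd : min_dist_eq C d)
  (hproj : forall t : 'I_s, min_dist_ge (proj_code t C) rho)
  (f : {ffun 'I_s -> 'I_(r + rho - 1)%N.+1} -> R)
  (hf_nonneg : forall j, j != zero_idx s (r + rho - 1)%N -> 0 <= f j)
  (hf_feas : forall i, i \in Tset s (r + rho - 1)%N rho d ->
      1 + \sum_(j | j != zero_idx s (r + rho - 1)%N)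
            f j * kraw_multi R q j i <= 0) :
  (#|C|%:R : R) <= 1 + \sum_(j | j != zero_idx s (r + rho - 1)%N)
            f j * kraw_multi R q j (zero_idx s (r + rho - 1)%N).
Proof.
subst q; have Q_gt0 : (0 < #|Q|)%N by apply: leq_trans hq.
have [[x0 [_ [x0C _ _ _]]] dC] := hd.
apply: (card_le_of_kernel (F := fun x y => 1 + \sum_(j | j != zero_idx _ _)
  f j * kraw_multi R #|Q| j (dist_profile x y))).
- by apply/card_gt0P; exists x0.
- apply: sum_kernel_comb_ge => // j _.
  exact/sos_kernel_sum_ge0/kraw_multi_sos.
- by move=> x _; rewrite dist_profile_xx.
- by move=> x y xC yC xy; exact: hf_feas (dist_profile_in_Tset dC hproj xC yC xy).
Qed.
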